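(* Consider $N$ agents in $\mathbb{R}^n$ with dynamics $\dot p_i=\sum_{k=1}^n u_{i,k}\,b_{i,k}$, $i=1,\ldots,N$, under the control law \[ u_{i,k}=\sqrt{\omega_{i,k}}\cos(\omega_{i,k}t+\varphi_{i,k})\,h_1(\psi_i(p))+\sqrt{\omega_{i,k}}\sin(\omega_{i,k}t+\varphi_{i,k})\,h_2(\psi_i(p)). \] For every initial condition $(t_0,p_0)\in\mathbb{R}\times\mathbb{R}^{nN}$, the closed-loop system has a unique solution defined on all of $\mathbb{R}$.
   Context: $G=(V,E)$ is an undirected graph with $V=\{1,\ldots,N\}$ and nonempty edge set $E$ of two-element subsets (edges written $ij$); $d_{ij}\geq0$ for $ij\in E$. For each $i$, $b_{i,1},\ldots,b_{i,n}$ is an orthonormal basis of $\mathbb{R}^n$. $\psi_i(p)=\frac14\sum_{j:\,ij\in E}(\|p_j-p_i\|^2-d_{ij}^2)^2$ for $p=(p_1,\ldots,p_N)\in\mathbb{R}^{nN}$. The $\omega_{i,k}$ are $nN$ pairwise distinct positive reals and $\varphi_{i,k}\in\mathbb{R}$. The functions $h_1,h_2:\mathbb{R}\to\mathbb{R}$ satisfy, for $\nu=1,2$: (i) $h_\nu(y)=0$ for $y\leq 0$; (ii) $h_\nu$ is bounded and of class $C^2$ on $(0,\infty)$; (iii) $h_\nu(y)/y$ remains bounded as $y\downarrow 0$; (iv) $h_\nu'(y)$ remains bounded as $y\downarrow0$; (v) $h_\nu''(y)\,y$ remains bounded as $y\downarrow 0$; (vi) there exist $r',c'>0$ with $h_2'(y)h_1(y)-h_1'(y)h_2(y)\leq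 -c'y$ for all $y\in(0,r']$. *)

From Stdlib Require Import Reals Lra List.
From Coquelicot Require Import Coquelicot.
Open Scope R_scope.

Definition sumR (m : nat) (f : nat -> R) : R :=
  fold_right (fun j acc => f j + acc) 0 (seq 0 m).

(* A configuration p = (p_1,...,p_N) in R^{nN}: p i a is the a-th coordinate
   of agent i (agents indexed 0..N-1, coordinates 0..n-1). *)
Definition config := nat -> nat -> R.

Definition dist2 (n : nat) (p : config) (i j : nat) : R :=
  sumR n (fun a => (p j a - p i a) ^ 2).

Definition psi (N n : nat) (E : nat -> nat -> bool) (d : nat -> nat -> R)
  (i : nat) (p : config) : R :=
  / 4 * sumR N (fun j => if E i j then (dist2 n p i j - d i j ^ 2) ^ 2 else 0).

Definition ctrl (N n : nat) (E : nat -> nat -> bool) (d : nat -> nat -> R)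
  (om ph : nat -> nat -> R) (h1 h2 : R -> R) (i k : nat) (t : R) (p : config) : R :=
  sqrt (om i k) * cos (om i k * t + ph i k) * h1 (psi N n E d i p)
  + sqrt (om i k) * sin (om i k * t + ph i k) * h2 (psi N n E d i p).

(* a-th coordinate of the closed-loop vector field for agent i:
   sum_k u_{i,k} b_{i,k}, where b i k a is the a-th coordinate of b_{i,k} *)
Definition field (N n : nat) (E : nat -> nat -> bool) (d : nat -> nat -> R)
  (b : nat -> nat -> nat -> R) (om ph : nat -> nat -> R) (h1 h2 : R -> R)
  (i a : nat) (t : R) (p : config) : R :=
  sumR n (fun k => ctrl N n E d om ph h1 h2 i k t p * b i k a).

Definition is_solution_on (N n : nat) (E : nat -> nat -> bool) (d : nat -> nat -> R)
  (b : nat -> nat -> nat -> R) (om ph : nat -> nat -> R) (h1 h2 : R -> R)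
  (lo hi : Rbar) (p : R -> config) : Prop :=
  forall t : R, Rbar_lt lo t -> Rbar_lt t hi ->
  forall i a, (i < N)%nat -> (a < n)%nat ->
    is_derive (fun s => p s i a) t (field N n E d b om ph h1 h2 i a t (p t)).

Definition admissible_h (h : R -> R) : Prop :=
  (forall y, y <= 0 -> h y = 0) /\
  (exists M, forall y, 0 < y -> Rabs (h y) <= M) /\
  (forall y, 0 < y ->
     ex_derive h y /\ ex_derive (Derive h) y /\ continuous (Derive (Derive h)) y) /\
  (exists M del, 0 < del /\ forall y, 0 < y < del -> Rabs (h y / y) <= M) /\
  (exists M del, 0 < del /\ forall y, 0 < y < del -> Rabs (Derive h y) <= M) /\
  (exists M del, 0 < del /\ forall y, 0 < y < del ->
     Rabs (Derive (Derive h) y * y) <= M).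

From Stdlib Require Import Reals Lra Lia List.
From Coquelicot Require Import Coquelicot.
Open Scope R_scope.

(* The closed-loop field is bounded, continuous in t, and Lipschitz in p on every
   box, uniformly in t: each h_nu vanishes on (-oo, 0], is O(y) at 0+, and has a
   derivative that is bounded near 0 and continuous on (0, oo), so it is Lipschitz
   on every half-line (-oo, Y]; and psi_i is a polynomial.  For such a field with
   bound Cb, every Picard iterate started at p0 stays, for |t - t0| <= T, in the
   box of radius Cb T around p0, where one Lipschitz constant K applies.  Hence
   consecutive iterates differ by at most B (K T)^m / m!, and they converge
   locally uniformly to a solution defined on all of R.  Any local solution is a
   fixed point of the Picard map as well, and the same estimate forces it to
   coincide with the limit. *)

Lemma sumR_S m f : sumR (S m) f = sumR m f + f m.
Proof.
  unfold sumR. rewrite seq_S, fold_right_app. simpl.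
  induction (seq 0 m) as [|x l IH]; simpl; lra.
Qed.

Lemma sumR_ext m f g : (forall k, (k < m)%nat -> f k = g k) -> sumR m f = sumR m g.
Proof.
  induction m as [|m IH]; intros H; [reflexivity|].
  rewrite !sumR_S, IH, H; auto.
Qed.

Lemma sumR_le m f g : (forall k, (k < m)%nat -> f k <= g k) -> sumR m f <= sumR m g.
Proof.
  induction m as [|m IH]; intros H; [apply Rle_refl|].
  rewrite !sumR_S. apply Rplus_le_compat; [apply IH; auto | apply H; lia].
Qed.

Lemma sumR_minus m f g : sumR m (fun k => f k - g k) = sumR m f - sumR m g.
Proof. induction m as [|m IH]; [unfold sumR; simpl; lra|]. rewrite !sumR_S, IH. lra. Qed.

Lemma sumR_mult_r m c f : sumR m (fun k => f k * c) = sumR m f * c.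
Proof. induction m as [|m IH]; [unfold sumR; simpl; lra|]. rewrite !sumR_S, IH. lra. Qed.

Lemma sumR_const m c : sumR m (fun _ => c) = INR m * c.
Proof. induction m as [|m IH]; [unfold sumR; simpl; lra|]. rewrite !sumR_S, IH, S_INR. lra. Qed.

Lemma sumR_abs m f : Rabs (sumR m f) <= sumR m (fun k => Rabs (f k)).
Proof.
  induction m as [|m IH]; [unfold sumR; simpl; rewrite Rabs_R0; lra|]. rewrite !sumR_S.
  eapply Rle_trans; [apply Rabs_triang | lra].
Qed.

Lemma sumR_nonneg m f : (forall k, (k < m)%nat -> 0 <= f k) -> 0 <= sumR m f.
Proof.
  intros H. rewrite <- (Rmult_0_r (INR m)), <- sumR_const. apply sumR_le. auto.
Qed.

Lemma sumR_ge_term m f k :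
  (forall k, (k < m)%nat -> 0 <= f k) -> (k < m)%nat -> f k <= sumR m f.
Proof.
  induction m as [|m IH]; intros H Hk; [lia|]. rewrite sumR_S.
  destruct (Nat.eq_dec k m) as [->|Hne].
  - assert (0 <= sumR m f) by (apply sumR_nonneg; auto). lra.
  - assert (f k <= sumR m f) by (apply IH; auto; lia).
    assert (0 <= f m) by auto. lra.
Qed.

Lemma ub_fin2 (N n : nat) (g : nat -> nat -> R) :
  exists C, 0 <= C /\ forall i a, (i < N)%nat -> (a < n)%nat -> g i a <= C.
Proof.
  set (S i := sumR n (fun a => Rabs (g i a))).
  assert (HS : forall i, 0 <= S i) by (intros; apply sumR_nonneg; intros; apply Rabs_pos).
  exists (sumR N S). split; [apply sumR_nonneg; auto|].
  intros i a Hi Ha. apply (Rle_trans _ (Rabs (g i a))); [apply Rle_abs|].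
  apply (Rle_trans _ (S i)); [| apply sumR_ge_term; auto].
  apply (sumR_ge_term n (fun a => Rabs (g i a))); auto. intros; apply Rabs_pos.
Qed.

Lemma fin_common_const (I : nat) (P : nat -> R -> Prop) :
  (forall i L L', L <= L' -> P i L -> P i L') ->
  (forall i, (i < I)%nat -> exists L, 0 <= L /\ P i L) ->
  exists L, 0 <= L /\ forall i, (i < I)%nat -> P i L.
Proof.
  intros Hmono. induction I as [|I IH]; intros H.
  - exists 0. split; [lra | intros; lia].
  - destruct IH as [L1 [HL1 H1]]; [auto|].
    destruct (H I) as [L2 [HL2 H2]]; [lia|].
    exists (Rmax L1 L2). split; [eapply Rle_trans; [exact HL1 | apply Rmax_l]|].
    intros i Hi. destruct (Nat.eq_dec i I) as [->|Hne].
    + eapply Hmono; [apply Rmax_r | exact H2].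
    + eapply Hmono; [apply Rmax_l | apply H1; lia].
Qed.

Definition between (a b u : R) := Rmin a b <= u <= Rmax a b.

Lemma between_trans a s t u : between a t s -> between a s u -> between a t u.
Proof. unfold between, Rmin, Rmax. repeat destruct Rle_dec; lra. Qed.

Lemma between_abs a s u : between a s u -> Rabs (u - a) <= Rabs (s - a).
Proof.
  unfold between, Rmin, Rmax. intros H.
  repeat destruct Rle_dec; unfold Rabs; repeat destruct Rcase_abs; lra.
Qed.

Lemma between_r a s : between a s s.
Proof. unfold between, Rmin, Rmax. repeat destruct Rle_dec; lra. Qed.

Lemma between_Rbar_interval (lo hi : Rbar) (t0 t u : R) :
  Rbar_lt lo t0 -> Rbar_lt t0 hi -> Rbar_lt lo t -> Rbar_lt t hi ->
  between t0 t u -> Rbar_lt lo u /\ Rbar_lt u hi.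
Proof.
  intros H1 H2 H3 H4 [Hmin Hmax]. split.
  - destruct lo as [l| |]; simpl in H1, H3 |- *; try tauto.
    assert (l < Rmin t0 t) by (apply Rmin_glb_lt; assumption). lra.
  - destruct hi as [h| |]; simpl in H2, H4 |- *; try tauto.
    assert (Rmax t0 t < h) by (apply Rmax_lub_lt; assumption). lra.
Qed.

Lemma ex_derive_continuous_R (f : R -> R) x : ex_derive f x -> continuous f x.
Proof. apply (ex_derive_continuous (K := R_AbsRing) (V := R_NormedModule)). Qed.

Lemma ex_RInt_continuous_R (f : R -> R) a b :
  (forall z, Rmin a b <= z <= Rmax a b -> continuous f z) -> ex_RInt f a b.
Proof. apply (ex_RInt_continuous (V := R_CompleteNormedModule)). Qed.

Lemma continuous_of_vanishing_bound (g u : R -> R) t :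
  (exists del, 0 < del /\ forall s, Rabs (s - t) < del -> Rabs (g s - g t) <= u s) ->
  continuous u t -> u t = 0 -> continuous g t.
Proof.
  intros [del [Hdel Hb]] Hu Hu0. apply filterlim_locally. intros eps.
  destruct (proj1 (filterlim_locally u (u t)) Hu eps) as [d1 Hd1].
  assert (Hpos : 0 < Rmin del d1) by (apply Rmin_pos; [lra | apply cond_pos]).
  exists (mkposreal _ Hpos). intros s Hs. change (Rabs (s - t) < Rmin del d1) in Hs.
  specialize (Hb s (Rlt_le_trans _ _ _ Hs (Rmin_l _ _))).
  specialize (Hd1 s (Rlt_le_trans _ _ _ Hs (Rmin_r _ _))).
  change (Rabs (u s - u t) < eps) in Hd1. change (Rabs (g s - g t) < eps).
  rewrite Hu0, Rminus_0_r in Hd1. eapply Rle_lt_trans; [exact Hb |].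
  eapply Rle_lt_trans; [apply Rle_abs | exact Hd1].
Qed.

Lemma lipschitz_continuous (g : R -> R) K t :
  (forall s, Rabs (g s - g t) <= K * Rabs (s - t)) -> continuous g t.
Proof.
  intros H. apply (continuous_of_vanishing_bound g (fun s => K * Rabs (s - t))).
  - exists 1. split; [lra | auto].
  - apply (continuous_mult (K := R_AbsRing) (fun _ => K)); [apply continuous_const|].
    apply continuous_Rabs_comp, (continuous_minus (fun s => s) (fun _ => t));
      [apply continuous_id | apply continuous_const].
  - rewrite Rminus_eq_0, Rabs_R0. ring.
Qed.

Lemma continuous_sumR m (f : nat -> R -> R) t :
  (forall k, (k < m)%nat -> continuous (f k) t) ->
  continuous (fun s => sumR m (fun k => f k s)) t.
Proof.
  induction m as [|m IH]; intros H.
  - apply continuous_const.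
  - apply (continuous_ext (fun s => plus (sumR m (fun k => f k s)) (f m s))).
    { intros; rewrite sumR_S; reflexivity. }
    apply (continuous_plus (K := R_AbsRing) (V := R_NormedModule));
      [apply IH; auto | apply H; lia].
Qed.

Lemma RInt_abs_le_const (g : R -> R) a b M :
  ex_RInt g a b -> (forall x, between a b x -> Rabs (g x) <= M) ->
  Rabs (RInt g a b) <= M * Rabs (b - a).
Proof.
  intros Hex HM. destruct (Rle_dec a b) as [Hab|Hab].
  - rewrite (Rabs_pos_eq (b - a)) by lra. rewrite Rmult_comm.
    apply abs_RInt_le_const; auto.
    intros x Hx. apply HM. unfold between, Rmin, Rmax. destruct Rle_dec; lra.
  - rewrite <- (opp_RInt_swap g b a) by (apply ex_RInt_swap; auto).
    change (Rabs (- RInt g b a) <= M * Rabs (b - a)).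
    rewrite Rabs_Ropp, (Rabs_left (b - a)) by lra. rewrite Rmult_comm.
    replace (- (b - a)) with (a - b) by ring.
    apply abs_RInt_le_const; [lra | apply ex_RInt_swap; auto |].
    intros x Hx. apply HM. unfold between, Rmin, Rmax. destruct Rle_dec; lra.
Qed.

Lemma RInt_scal_pow c a s m :
  RInt (fun u => c * (u - a) ^ m) a s = c * (s - a) ^ S m / INR (S m).
Proof.
  assert (HS : INR (S m) <> 0) by (apply not_0_INR; lia).
  apply is_RInt_unique.
  replace (c * (s - a) ^ S m / INR (S m)) with
    (minus (c * (s - a) ^ S m / INR (S m)) (c * (a - a) ^ S m / INR (S m))).
  2:{ rewrite Rminus_eq_0, pow_i by lia. unfold minus, plus, opp; simpl. field. exact HS. }
  apply (is_RInt_derive (fun u => c * (u - a) ^ S m / INR (S m))).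
  - intros x _. auto_derive; auto.
    change (match m with 0%nat => 1 | S _ => INR m + 1 end) with (INR (S m)).
    unfold Rminus. field. exact HS.
  - intros x _. apply ex_derive_continuous_R. auto_derive. auto.
Qed.

Lemma RInt_abs_le_RInt (g k : R -> R) a b : a <= b -> ex_RInt g a b -> ex_RInt k a b ->
  (forall u, a < u < b -> Rabs (g u) <= k u) -> Rabs (RInt g a b) <= RInt k a b.
Proof.
  intros Hab Hg Hk Hb. eapply Rle_trans; [apply abs_RInt_le; auto |].
  apply RInt_le; auto. apply (ex_RInt_norm g), Hg.
Qed.

Lemma RInt_abs_le_pow (g : R -> R) c a s m :
  ex_RInt g a s -> (forall u, between a s u -> Rabs (g u) <= c * Rabs (u - a) ^ m) ->
  Rabs (RInt g a s) <= c * Rabs (s - a) ^ S m / INR (S m).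
Proof.
  intros Hex Hb. unfold between, Rmin, Rmax in Hb.
  destruct (Rle_dec a s) as [Has|Has].
  - rewrite (Rabs_pos_eq (s - a)), <- RInt_scal_pow by lra.
    apply RInt_abs_le_RInt; auto.
    + apply ex_RInt_continuous_R. intros z _. apply ex_derive_continuous_R. auto_derive. auto.
    + intros u Hu. rewrite <- (Rabs_pos_eq (u - a)) by lra. apply Hb. lra.
  - (* On [s, a] one has [|u - a| ^ m = (-1) ^ m (u - a) ^ m]. *)
    set (k := fun u => c * (-1) ^ m * (u - a) ^ m).
    assert (Hk : forall x y, ex_RInt k x y).
    { intros x y. apply ex_RInt_continuous_R. intros z _.
      apply ex_derive_continuous_R. unfold k. auto_derive. auto. }
    rewrite <- (opp_RInt_swap g s a) by (apply ex_RInt_swap; exact Hex).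
    change (Rabs (- RInt g s a) <= c * Rabs (s - a) ^ S m / INR (S m)).
    replace (c * Rabs (s - a) ^ S m / INR (S m)) with (RInt k s a).
    2:{ rewrite <- opp_RInt_swap by apply Hk.
        change (- RInt k a s = c * Rabs (s - a) ^ S m / INR (S m)). unfold k.
        rewrite RInt_scal_pow, Rabs_left by lra.
        replace (- (s - a)) with (-1 * (s - a)) by ring.
        rewrite Rpow_mult_distr, <- (tech_pow_Rmult (-1) m). field.
        apply not_0_INR; lia. }
    rewrite Rabs_Ropp. apply RInt_abs_le_RInt; [lra | apply ex_RInt_swap; exact Hex | apply Hk |].
    intros u Hu. unfold k. rewrite Rmult_assoc, <- Rpow_mult_distr.
    replace (-1 * (u - a)) with (Rabs (u - a)) by (rewrite Rabs_left; lra). apply Hb. lra.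
Qed.

Lemma is_lim_seq_le_const (u : nat -> R) (l M : R) :
  is_lim_seq u l -> (forall m, u m <= M) -> l <= M.
Proof. intros Hu Hm. exact (is_lim_seq_le u (fun _ => M) l M Hm Hu (is_lim_seq_const M)). Qed.

Lemma eq_of_dist_le_scal_null (x y C : R) (a : nat -> R) k0 :
  is_lim_seq a 0 -> (forall m, (k0 <= m)%nat -> Rabs (x - y) <= C * a m) -> x = y.
Proof.
  intros Ha H.
  assert (Hs : is_lim_seq (fun m => C * a (m + k0)%nat) 0).
  { replace (Finite 0) with (Rbar_mult C 0) by (simpl; f_equal; ring).
    apply is_lim_seq_scal_l, (is_lim_seq_incr_n a k0 0), Ha. }
  assert (Hle : Rabs (x - y) <= 0).
  { apply (is_lim_seq_le (fun _ => Rabs (x - y)) (fun m => C * a (m + k0)%nat) (Rabs (x - y)) 0);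
      [intros; apply H; lia | apply is_lim_seq_const | exact Hs]. }
  assert (Y := Rabs_pos (x - y)).
  apply Rminus_diag_uniq, Rabs_eq_0. lra.
Qed.

Lemma is_lim_seq_of_halving_increments (v w : nat -> R) k0 :
  (forall m, Rabs (v (S m) - v m) <= w m) ->
  (forall m, (k0 <= m)%nat -> w (S m) <= w m / 2) -> (forall m, 0 <= w m) ->
  is_lim_seq w 0 ->
  exists l : R, is_lim_seq v l /\ forall m, (k0 <= m)%nat -> Rabs (l - v m) <= 2 * w m.
Proof.
  intros Hstep Hhalf Hw0 Hw.
  assert (Htele : forall p m, (k0 <= m)%nat ->
            Rabs (v (p + m)%nat - v m) <= 2 * w m - 2 * w (p + m)%nat).
  { induction p as [|p IH]; intros m Hm.
    - simpl. rewrite Rminus_eq_0, Rabs_R0. lra.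
    - specialize (IH m Hm). specialize (Hstep (p + m)%nat).
      specialize (Hhalf (p + m)%nat ltac:(lia)). simpl.
      replace (v (S (p + m)) - v m) with
        ((v (S (p + m)) - v (p + m)%nat) + (v (p + m)%nat - v m)) by ring.
      eapply Rle_trans; [apply Rabs_triang | lra]. }
  assert (Hbound : forall p m, (k0 <= m)%nat -> Rabs (v (p + m)%nat - v m) <= 2 * w m).
  { intros p m Hm. specialize (Htele p m Hm). specialize (Hw0 (p + m)%nat). lra. }
  assert (Hcauchy : ex_finite_lim_seq v).
  { apply ex_lim_seq_cauchy_corr. intros eps.
    apply is_lim_seq_Reals in Hw. destruct (Hw (eps / 8)) as [M0 HM0].
    { assert (X := cond_pos eps). lra. }
    set (M := Nat.max k0 M0). exists M. intros p q Hp Hq.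
    assert (HwM : w M < eps / 8).
    { specialize (HM0 M ltac:(lia)). unfold R_dist in HM0. rewrite Rminus_0_r in HM0.
      eapply Rle_lt_trans; [apply Rle_abs | exact HM0]. }
    assert (A := Hbound (p - M)%nat M ltac:(lia)). assert (B := Hbound (q - M)%nat M ltac:(lia)).
    replace (p - M + M)%nat with p in A by lia. replace (q - M + M)%nat with q in B by lia.
    replace (v p - v q) with ((v p - v M) - (v q - v M)) by ring.
    eapply Rle_lt_trans; [apply Rabs_triang |]. rewrite Rabs_Ropp.
    assert (X := cond_pos eps). lra. }
  destruct Hcauchy as [l Hl]. exists l. split; [exact Hl|]. intros m Hm.
  apply (is_lim_seq_le_const (fun p => Rabs (v (p + m)%nat - v m))); [| intros; apply Hbound; auto].
  apply (is_lim_seq_abs _ (l - v m)), is_lim_seq_minus'; [| apply is_lim_seq_const].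
  apply (is_lim_seq_incr_n v m l), Hl.
Qed.

Definition pow_fact (c : R) (m : nat) : R := c ^ m / INR (Factorial.fact m).

Lemma pow_fact_0 c : pow_fact c 0 = 1.
Proof. unfold pow_fact. simpl. field. Qed.

Lemma pow_fact_1 c : pow_fact c 1 = c.
Proof. unfold pow_fact. simpl. field. Qed.

Lemma pow_fact_nonneg c m : 0 <= c -> 0 <= pow_fact c m.
Proof.
  intros Hc. unfold pow_fact. apply Rmult_le_pos; [apply pow_le; auto |].
  left. apply Rinv_0_lt_compat, lt_0_INR, Factorial.lt_O_fact.
Qed.

Lemma pow_fact_le_compat c1 c2 m : 0 <= c1 <= c2 -> pow_fact c1 m <= pow_fact c2 m.
Proof.
  intros H. unfold pow_fact. apply Rmult_le_compat_r; [| apply pow_incr; auto].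
  left. apply Rinv_0_lt_compat, lt_0_INR, Factorial.lt_O_fact.
Qed.

Lemma is_lim_seq_pow_fact c : is_lim_seq (pow_fact c) 0.
Proof. apply is_lim_seq_Reals, cv_speed_pow_fact. Qed.

Lemma pow_fact_halving c : 0 <= c ->
  exists k0, forall m, (k0 <= m)%nat -> pow_fact c (S m) <= pow_fact c m / 2.
Proof.
  intros Hc. destruct (INR_archimed 1 (2 * c)) as [k Hk]; [lra|].
  exists k. intros m Hm. unfold pow_fact. rewrite fact_simpl, mult_INR. simpl pow.
  assert (HS : INR k <= INR (S m)) by (apply le_INR; lia).
  assert (Hf : 0 < INR (Factorial.fact m)) by apply lt_0_INR, Factorial.lt_O_fact.
  assert (Hp : 0 <= c ^ m) by (apply pow_le; auto).
  assert (HS0 : 0 < INR (S m)) by (apply lt_0_INR; lia).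
  apply (Rmult_le_reg_r (INR (S m) * INR (Factorial.fact m))); [apply Rmult_lt_0_compat; auto |].
  replace (c * c ^ m / (INR (S m) * INR (Factorial.fact m)) * (INR (S m) * INR (Factorial.fact m)))
    with (c ^ m * c) by (field; lra).
  replace (c ^ m / INR (Factorial.fact m) / 2 * (INR (S m) * INR (Factorial.fact m)))
    with (c ^ m * (INR (S m) / 2)) by (field; lra).
  apply Rmult_le_compat_l; lra.
Qed.

Section Configurations.
Variables N n : nat.

Definition dist_l1 (p q : config) : R :=
  sumR N (fun i => sumR n (fun a => Rabs (p i a - q i a))).

Definition in_box (c : config) (r : R) (p : config) : Prop :=
  forall i a, (i < N)%nat -> (a < n)%nat -> Rabs (p i a - c i a) <= r.

Lemma dim_scale_nonneg x : 0 <= x -> 0 <= INR N * (INR n * x).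
Proof.
  intros Hx. apply Rmult_le_pos; [apply pos_INR | apply Rmult_le_pos; [apply pos_INR | exact Hx]].
Qed.

Lemma dist_l1_nonneg p q : 0 <= dist_l1 p q.
Proof. apply sumR_nonneg; intros; apply sumR_nonneg; intros; apply Rabs_pos. Qed.

Lemma coord_le_dist_l1 p q i a : (i < N)%nat -> (a < n)%nat ->
  Rabs (p i a - q i a) <= dist_l1 p q.
Proof.
  intros Hi Ha. unfold dist_l1.
  apply (Rle_trans _ (sumR n (fun a => Rabs (p i a - q i a)))).
  - apply (sumR_ge_term n (fun a => Rabs (p i a - q i a))); auto. intros; apply Rabs_pos.
  - apply (sumR_ge_term N (fun i => sumR n (fun a => Rabs (p i a - q i a)))); auto.
    intros; apply sumR_nonneg; intros; apply Rabs_pos.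
Qed.

Lemma dist_l1_le_coord p q e :
  (forall i a, (i < N)%nat -> (a < n)%nat -> Rabs (p i a - q i a) <= e) ->
  dist_l1 p q <= INR N * (INR n * e).
Proof.
  intros H. unfold dist_l1. rewrite <- sumR_const. apply sumR_le. intros i Hi.
  rewrite <- sumR_const. apply sumR_le. auto.
Qed.

Lemma dist_l1_ext p q p' q' :
  (forall i a, (i < N)%nat -> (a < n)%nat -> p i a = p' i a /\ q i a = q' i a) ->
  dist_l1 p q = dist_l1 p' q'.
Proof.
  intros H. apply sumR_ext. intros i Hi. apply sumR_ext. intros a Ha.
  destruct (H i a Hi Ha) as [-> ->]. reflexivity.
Qed.

Lemma dist_l1_in_box c r p q : in_box c r p -> in_box c r q ->
  dist_l1 p q <= INR N * (INR n * (2 * r)).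
Proof.
  intros Hp Hq. apply dist_l1_le_coord. intros i a Hi Ha.
  replace (p i a - q i a) with ((p i a - c i a) - (q i a - c i a)) by ring.
  eapply Rle_trans; [apply Rabs_triang |]. rewrite Rabs_Ropp.
  specialize (Hp i a Hi Ha). specialize (Hq i a Hi Ha). lra.
Qed.

Lemma dist_l1_refl p : dist_l1 p p = 0.
Proof.
  unfold dist_l1. rewrite <- (Rmult_0_r (INR N)), <- sumR_const. apply sumR_ext. intros i _.
  rewrite <- (Rmult_0_r (INR n)), <- sumR_const. apply sumR_ext. intros a _.
  rewrite Rminus_eq_0. apply Rabs_R0.
Qed.

Definition coord_continuous (x : R -> config) (t : R) : Prop :=
  forall i a, (i < N)%nat -> (a < n)%nat -> continuous (fun s => x s i a) t.

Lemma continuous_dist_l1 (x : R -> config) t :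
  coord_continuous x t -> continuous (fun s => dist_l1 (x s) (x t)) t.
Proof.
  intros H. unfold dist_l1.
  apply (continuous_sumR N (fun i s => sumR n (fun a => Rabs (x s i a - x t i a)))). intros i Hi.
  apply (continuous_sumR n (fun a s => Rabs (x s i a - x t i a))). intros a Ha.
  apply continuous_Rabs_comp,
    (continuous_minus (K := R_AbsRing) (V := R_NormedModule) (fun s => x s i a));
    [apply H; auto | apply continuous_const].
Qed.

End Configurations.

Section Picard.
Variables (N n : nat) (F : nat -> nat -> R -> config -> R) (t0 : R) (p0 : config) (Cb : R).
Hypothesis Cb_nonneg : 0 <= Cb.
Hypothesis F_bounded : forall i a t p, (i < N)%nat -> (a < n)%nat -> Rabs (F i a t p) <= Cb.
Hypothesis F_loc_lipschitz : forall c r, exists L, 0 <= L /\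
  forall t p q, in_box N n c r p -> in_box N n c r q ->
  forall i a, (i < N)%nat -> (a < n)%nat -> Rabs (F i a t p - F i a t q) <= L * dist_l1 N n p q.
Hypothesis F_continuous_t : forall i a p t, continuous (fun s => F i a s p) t.

Lemma continuous_F_along x t i a : coord_continuous N n x t -> (i < N)%nat -> (a < n)%nat ->
  continuous (fun s => F i a s (x s)) t.
Proof.
  intros Hx Hi Ha. destruct (F_loc_lipschitz (x t) 1) as [L [HL HLip]].
  apply (continuous_of_vanishing_bound _
    (fun s => L * dist_l1 N n (x s) (x t) + Rabs (F i a s (x t) - F i a t (x t)))).
  - destruct (proj1 (filterlim_locally _ _) (continuous_dist_l1 N n x t Hx) (mkposreal 1 Rlt_0_1))
      as [del Hdel].
    exists del. split; [apply cond_pos|]. intros s Hs.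
    assert (Hd : dist_l1 N n (x s) (x t) <= 1).
    { specialize (Hdel s Hs).
      change (Rabs (dist_l1 N n (x s) (x t) - dist_l1 N n (x t) (x t)) < 1) in Hdel.
      rewrite dist_l1_refl, Rminus_0_r in Hdel. apply Rabs_lt_between in Hdel. lra. }
    assert (Hbs : in_box N n (x t) 1 (x s)).
    { intros i' a' Hi' Ha'. eapply Rle_trans; [apply coord_le_dist_l1; eauto | exact Hd]. }
    assert (Hbt : in_box N n (x t) 1 (x t)).
    { intros i' a' _ _. rewrite Rminus_eq_0, Rabs_R0. lra. }
    replace (F i a s (x s) - F i a t (x t)) with
      ((F i a s (x s) - F i a s (x t)) + (F i a s (x t) - F i a t (x t))) by ring.
    eapply Rle_trans; [apply Rabs_triang |].
    assert (Y := HLip s (x s) (x t) Hbs Hbt i a Hi Ha). lra.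
  - apply (continuous_plus (K := R_AbsRing) (V := R_NormedModule)).
    + apply (continuous_mult (K := R_AbsRing) (fun _ => L));
        [apply continuous_const | apply continuous_dist_l1; auto].
    + apply continuous_Rabs_comp,
        (continuous_minus (K := R_AbsRing) (V := R_NormedModule) (fun s => F i a s (x t)));
        [apply F_continuous_t | apply continuous_const].
  - rewrite dist_l1_refl, Rminus_eq_0, Rabs_R0. ring.
Qed.

Lemma ex_RInt_F_along x s i a : (forall u, between t0 s u -> coord_continuous N n x u) ->
  (i < N)%nat -> (a < n)%nat -> ex_RInt (fun u => F i a u (x u)) t0 s.
Proof. intros H Hi Ha. apply ex_RInt_continuous_R. intros z Hz. apply continuous_F_along; auto. Qed.

Definition picard_step (x : R -> config) (s : R) : config :=
  fun i a => p0 i a + RInt (fun u => F i a u (x u)) t0 s.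

Lemma picard_step_t0 x i a : picard_step x t0 i a = p0 i a.
Proof. unfold picard_step. rewrite RInt_point. apply Rplus_0_r. Qed.

Lemma picard_step_dev x s i a : (forall u, between t0 s u -> coord_continuous N n x u) ->
  (i < N)%nat -> (a < n)%nat -> Rabs (picard_step x s i a - p0 i a) <= Cb * Rabs (s - t0).
Proof.
  intros H Hi Ha. unfold picard_step. rewrite Rplus_minus_l.
  apply RInt_abs_le_const; [apply ex_RInt_F_along; auto |]. intros; apply F_bounded; auto.
Qed.

Lemma picard_step_lipschitz x s u i a : (forall v, coord_continuous N n x v) ->
  (i < N)%nat -> (a < n)%nat ->
  Rabs (picard_step x s i a - picard_step x u i a) <= Cb * Rabs (s - u).
Proof.
  intros H Hi Ha. unfold picard_step. set (g := fun v => F i a v (x v)).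
  assert (Hex : forall a1 b1, ex_RInt g a1 b1).
  { intros. apply ex_RInt_continuous_R. intros z _. apply continuous_F_along; auto. }
  rewrite Rminus_plus_l_l.
  replace (RInt g t0 s - RInt g t0 u) with (RInt g u s).
  - apply RInt_abs_le_const; auto. intros; apply F_bounded; auto.
  - rewrite <- (RInt_Chasles g u t0 s), <- (opp_RInt_swap g t0 u) by auto.
    change (- RInt g t0 u + RInt g t0 s = RInt g t0 s - RInt g t0 u). ring.
Qed.

Lemma picard_step_continuous x : (forall v, coord_continuous N n x v) ->
  forall s, coord_continuous N n (picard_step x) s.
Proof.
  intros H s i a Hi Ha. apply (lipschitz_continuous _ Cb).
  intros u. apply picard_step_lipschitz; auto.
Qed.

(* [dist_l1] adds up [N n] coordinate bounds, hence the gain [N n L] per step. *)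
Lemma picard_step_contract x y r L B m s : 0 <= L ->
  (forall t p q, in_box N n p0 r p -> in_box N n p0 r q -> forall i a, (i < N)%nat -> (a < n)%nat ->
     Rabs (F i a t p - F i a t q) <= L * dist_l1 N n p q) ->
  (forall u, between t0 s u ->
     coord_continuous N n x u /\ coord_continuous N n y u /\
     in_box N n p0 r (x u) /\ in_box N n p0 r (y u) /\
     dist_l1 N n (x u) (y u) <= B * pow_fact (INR N * (INR n * L) * Rabs (u - t0)) m) ->
  dist_l1 N n (picard_step x s) (picard_step y s)
    <= B * pow_fact (INR N * (INR n * L) * Rabs (s - t0)) (S m).
Proof.
  intros HL HLip H. set (K := INR N * (INR n * L)).
  set (c := L * B * K ^ m / INR (Factorial.fact m)).
  apply (Rle_trans _ (INR N * (INR n * (c * Rabs (s - t0) ^ S m / INR (S m))))).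
  - apply dist_l1_le_coord. intros i a Hi Ha. unfold picard_step.
    rewrite Rminus_plus_l_l.
    assert (Ex : ex_RInt (fun u => F i a u (x u)) t0 s)
      by (apply ex_RInt_F_along; auto; intros; apply H; auto).
    assert (Ey : ex_RInt (fun u => F i a u (y u)) t0 s)
      by (apply ex_RInt_F_along; auto; intros; apply H; auto).
    assert (Hm : RInt (fun u => F i a u (x u) - F i a u (y u)) t0 s
                 = RInt (fun u => F i a u (x u)) t0 s - RInt (fun u => F i a u (y u)) t0 s)
      by exact (RInt_minus _ _ t0 s Ex Ey).
    rewrite <- Hm.
    apply RInt_abs_le_pow; [apply (ex_RInt_minus (V := R_NormedModule) _ _ t0 s Ex Ey) |].
    intros u Hu. destruct (H u Hu) as [_ [_ [Hxu [Hyu Hd]]]].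
    eapply Rle_trans; [apply HLip; eauto |].
    eapply Rle_trans; [apply Rmult_le_compat_l; [exact HL | exact Hd] |].
    unfold c, pow_fact. rewrite Rpow_mult_distr. right. fold K. field. apply INR_fact_neq_0.
  - right. unfold c, pow_fact. rewrite Rpow_mult_distr. fold K. rewrite fact_simpl, mult_INR.
    replace (K ^ S m) with (K * K ^ m) by reflexivity. unfold K.
    field. split; [apply INR_fact_neq_0 | apply not_0_INR; lia].
Qed.

Lemma picard_gronwall (I : R -> Prop) (x y : nat -> R -> config) r L B : 0 <= L ->
  (forall t p q, in_box N n p0 r p -> in_box N n p0 r q -> forall i a, (i < N)%nat -> (a < n)%nat ->
     Rabs (F i a t p - F i a t q) <= L * dist_l1 N n p q) ->
  (forall s u, I s -> between t0 s u -> I u) ->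
  (forall m s, I s -> coord_continuous N n (x m) s /\ coord_continuous N n (y m) s /\
     in_box N n p0 r (x m s) /\ in_box N n p0 r (y m s)) ->
  (forall m s, I s -> forall i a, (i < N)%nat -> (a < n)%nat ->
     x (S m) s i a = picard_step (x m) s i a /\ y (S m) s i a = picard_step (y m) s i a) ->
  (forall s, I s -> dist_l1 N n (x O s) (y O s) <= B) ->
  forall m s, I s -> dist_l1 N n (x m s) (y m s)
                     <= B * pow_fact (INR N * (INR n * L) * Rabs (s - t0)) m.
Proof.
  intros HL HLip HI Hreg Hstep H0. induction m as [|m IH]; intros s Hs.
  - rewrite pow_fact_0, Rmult_1_r. auto.
  - rewrite (dist_l1_ext N n _ _ (picard_step (x m) s) (picard_step (y m) s)) by auto.
    apply (picard_step_contract _ _ r); auto.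
    intros u Hu. assert (Hu' := HI s u Hs Hu).
    destruct (Hreg m u Hu') as [? [? [? ?]]]. repeat split; auto.
Qed.

Fixpoint picard (m : nat) : R -> config :=
  match m with O => fun _ => p0 | S m' => picard_step (picard m') end.

Lemma picard_continuous m s : coord_continuous N n (picard m) s.
Proof.
  revert s. induction m as [|m IH]; intros s.
  - intros i a _ _. apply continuous_const.
  - apply picard_step_continuous, IH.
Qed.

Lemma picard_lipschitz m s u i a : (i < N)%nat -> (a < n)%nat ->
  Rabs (picard m s i a - picard m u i a) <= Cb * Rabs (s - u).
Proof.
  intros Hi Ha. destruct m as [|m].
  - simpl. rewrite Rminus_eq_0, Rabs_R0. apply Rmult_le_pos; [auto | apply Rabs_pos].
  - apply picard_step_lipschitz; auto. apply picard_continuous.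
Qed.

Lemma picard_t0 m i a : picard m t0 i a = p0 i a.
Proof. destruct m; [reflexivity | apply picard_step_t0]. Qed.

Lemma picard_in_box m T s : Rabs (s - t0) <= T -> in_box N n p0 (Cb * T) (picard m s).
Proof.
  intros Hs i a Hi Ha. rewrite <- (picard_t0 m i a).
  eapply Rle_trans; [apply picard_lipschitz; auto | apply Rmult_le_compat_l; auto].
Qed.

Lemma picard_cauchy T : 0 <= T -> exists B c k0, 0 <= B /\ 0 <= c /\
  (forall m, (k0 <= m)%nat -> pow_fact c (S m) <= pow_fact c m / 2) /\
  forall m s, Rabs (s - t0) <= T -> dist_l1 N n (picard (S m) s) (picard m s) <= B * pow_fact c m.
Proof.
  intros HT. destruct (F_loc_lipschitz p0 (Cb * T)) as [L [HL HLip]].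
  set (K := INR N * (INR n * L)).
  assert (HK : 0 <= K) by (apply dim_scale_nonneg; auto).
  set (B := INR N * (INR n * (2 * (Cb * T)))).
  assert (HB : 0 <= B) by (apply dim_scale_nonneg; nra).
  destruct (pow_fact_halving (K * T)) as [k0 Hk0]; [nra|].
  exists B, (K * T), k0. split; [auto|]. split; [nra|]. split; [auto|].
  intros m s Hs. eapply Rle_trans.
  - apply (picard_gronwall (fun s => Rabs (s - t0) <= T) (fun m => picard (S m)) picard
             (Cb * T) L B); auto.
    + intros s' u Hs' Hu. eapply Rle_trans; [apply between_abs; eauto | auto].
    + intros m' s' Hs'. repeat split; try apply picard_continuous; apply picard_in_box; auto.
    + intros s' Hs'. apply (dist_l1_in_box N n p0); apply picard_in_box; auto.
  - apply Rmult_le_compat_l; auto. apply pow_fact_le_compat.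
    split; [apply Rmult_le_pos; auto; apply Rabs_pos | apply Rmult_le_compat_l; auto].
Qed.

Definition picard_limit (s : R) : config := fun i a => real (Lim_seq (fun m => picard m s i a)).

Lemma picard_limit_conv T : 0 <= T -> exists B c k0, 0 <= B /\ 0 <= c /\
  (forall m, (k0 <= m)%nat -> pow_fact c (S m) <= pow_fact c m / 2) /\
  forall s i a, Rabs (s - t0) <= T -> (i < N)%nat -> (a < n)%nat ->
    is_lim_seq (fun m => picard m s i a) (picard_limit s i a) /\
    forall m, (k0 <= m)%nat -> Rabs (picard_limit s i a - picard m s i a) <= 2 * (B * pow_fact c m).
Proof.
  intros HT. destruct (picard_cauchy T HT) as [B [c [k0 [HB [Hc [Hhalf Hd]]]]]].
  exists B, c, k0. do 3 (split; [auto|]). intros s i a Hs Hi Ha.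
  destruct (is_lim_seq_of_halving_increments (fun m => picard m s i a)
             (fun m => B * pow_fact c m) k0) as [l [Hl Hb]].
  - intros m. eapply Rle_trans; [apply (coord_le_dist_l1 N n); auto | apply Hd; auto].
  - intros m Hm. specialize (Hhalf m Hm). assert (Y := pow_fact_nonneg c m Hc). nra.
  - intros m. apply Rmult_le_pos; auto. apply pow_fact_nonneg; auto.
  - replace (Finite 0) with (Rbar_mult B 0) by (simpl; f_equal; ring).
    apply is_lim_seq_scal_l, is_lim_seq_pow_fact.
  - replace (picard_limit s i a) with l; auto.
    unfold picard_limit. rewrite (is_lim_seq_unique _ _ Hl). reflexivity.
Qed.

Lemma is_lim_seq_picard s i a : (i < N)%nat -> (a < n)%nat ->
  is_lim_seq (fun m => picard m s i a) (picard_limit s i a).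
Proof.
  intros Hi Ha.
  destruct (picard_limit_conv (Rabs (s - t0)) (Rabs_pos _)) as [B [c [k0 [_ [_ [_ H]]]]]].
  apply H; auto. lra.
Qed.

Lemma picard_limit_lipschitz s u i a : (i < N)%nat -> (a < n)%nat ->
  Rabs (picard_limit s i a - picard_limit u i a) <= Cb * Rabs (s - u).
Proof.
  intros Hi Ha. apply (is_lim_seq_le_const (fun m => Rabs (picard m s i a - picard m u i a))).
  - apply (is_lim_seq_abs _ (picard_limit s i a - picard_limit u i a)).
    apply is_lim_seq_minus'; apply is_lim_seq_picard; auto.
  - intros m. apply picard_lipschitz; auto.
Qed.

Lemma picard_limit_t0 i a : picard_limit t0 i a = p0 i a.
Proof.
  unfold picard_limit. rewrite (Lim_seq_ext _ (fun _ => p0 i a)) by (intros; apply picard_t0).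
  rewrite Lim_seq_const. reflexivity.
Qed.

Lemma picard_limit_continuous s : coord_continuous N n picard_limit s.
Proof.
  intros i a Hi Ha. apply (lipschitz_continuous _ Cb). intros u. apply picard_limit_lipschitz; auto.
Qed.

Lemma picard_limit_in_box T s : Rabs (s - t0) <= T -> in_box N n p0 (Cb * T) (picard_limit s).
Proof.
  intros Hs i a Hi Ha. rewrite <- (picard_limit_t0 i a).
  eapply Rle_trans; [apply picard_limit_lipschitz; auto | apply Rmult_le_compat_l; auto].
Qed.

Lemma picard_limit_fixed T s i a : 0 <= T -> Rabs (s - t0) <= T -> (i < N)%nat -> (a < n)%nat ->
  picard_limit s i a = picard_step picard_limit s i a.
Proof.
  intros HT Hs Hi Ha.
  destruct (picard_limit_conv T HT) as [B [c [k0 [HB [Hc [Hhalf Hconv]]]]]].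
  destruct (F_loc_lipschitz p0 (Cb * T)) as [L [HL HLip]].
  set (K := INR N * (INR n * L)).
  assert (HK : 0 <= K) by (apply dim_scale_nonneg; auto).
  set (D := INR N * (INR n * (2 * B))).
  assert (HD : 0 <= D) by (apply dim_scale_nonneg; lra).
  (* Split [X - step X] as [(X - X_(m+1)) + (step X_m - step X)]; both are O(c^m / m!). *)
  apply (eq_of_dist_le_scal_null _ _ (2 * B + D * (K * T)) (pow_fact c) k0 (is_lim_seq_pow_fact c)).
  intros m Hm. assert (Ha_m := pow_fact_nonneg c m Hc).
  assert (H1 : Rabs (picard_limit s i a - picard (S m) s i a) <= 2 * (B * pow_fact c m)).
  { eapply Rle_trans; [apply Hconv; auto |]. specialize (Hhalf m Hm). nra. }
  assert (H2 : dist_l1 N n (picard_step (picard m) s) (picard_step picard_limit s)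
               <= INR N * (INR n * (2 * (B * pow_fact c m))) * pow_fact (K * Rabs (s - t0)) 1).
  { apply (picard_step_contract _ _ (Cb * T) L _ 0 s); auto.
    intros u Hu.
    assert (Hu' : Rabs (u - t0) <= T) by (eapply Rle_trans; [apply between_abs; eauto | auto]).
    repeat split; try apply picard_continuous; try apply picard_limit_continuous;
      try apply picard_in_box; try apply picard_limit_in_box; auto.
    rewrite pow_fact_0, Rmult_1_r. apply dist_l1_le_coord. intros i' a' Hi' Ha'.
    rewrite <- Rabs_Ropp, Ropp_minus_distr. apply Hconv; auto. }
  replace (INR N * (INR n * (2 * (B * pow_fact c m)))) with (D * pow_fact c m) in H2
    by (unfold D; ring).
  rewrite pow_fact_1 in H2.
  assert (H3 := coord_le_dist_l1 N n (picard_step (picard m) s) (picard_step picard_limit s)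
                  i a Hi Ha).
  assert (H4 : K * Rabs (s - t0) <= K * T) by (apply Rmult_le_compat_l; auto).
  replace (picard_limit s i a - picard_step picard_limit s i a) with
    ((picard_limit s i a - picard (S m) s i a)
     + (picard_step (picard m) s i a - picard_step picard_limit s i a)) by (simpl; ring).
  eapply Rle_trans; [apply Rabs_triang |].
  assert (Da := Rmult_le_pos _ _ HD Ha_m).
  nra.
Qed.

Lemma is_derive_picard_limit t i a : (i < N)%nat -> (a < n)%nat ->
  is_derive (fun s => picard_limit s i a) t (F i a t (picard_limit t)).
Proof.
  intros Hi Ha. apply (is_derive_ext_loc (fun s => picard_step picard_limit s i a)).
  - exists (mkposreal 1 Rlt_0_1). intros s Hs. change (Rabs (s - t) < 1) in Hs.
    symmetry. apply (picard_limit_fixed (Rabs (t - t0) + 1)); auto.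
    + assert (Y := Rabs_pos (t - t0)). lra.
    + replace (s - t0) with ((s - t) + (t - t0)) by ring.
      eapply Rle_trans; [apply Rabs_triang | lra].
  - set (g := fun u => F i a u (picard_limit u)).
    assert (Hg : forall u, continuous g u)
      by (intros u; apply continuous_F_along; auto; apply picard_limit_continuous).
    assert (HI : is_derive (fun s => RInt g t0 s) t (g t)).
    { apply (is_derive_RInt _ _ t0); [| apply Hg].
      exists (mkposreal 1 Rlt_0_1). intros s _.
      apply (RInt_correct (V := R_CompleteNormedModule)), ex_RInt_continuous_R. auto. }
    assert (Hp := is_derive_plus (fun _ => p0 i a) _ t 0 (g t) (is_derive_const _ t) HI).
    unfold plus in Hp. simpl in Hp. rewrite Rplus_0_l in Hp. exact Hp.
Qed.

Definition solves (lo hi : Rbar) (q : R -> config) : Prop :=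
  forall t : R, Rbar_lt lo t -> Rbar_lt t hi -> forall i a, (i < N)%nat -> (a < n)%nat ->
    is_derive (fun s => q s i a) t (F i a t (q t)).

Lemma solution_picard_fixed (lo hi : Rbar) (q : R -> config) (t : R) :
  Rbar_lt lo t0 -> Rbar_lt t0 hi -> Rbar_lt lo t -> Rbar_lt t hi -> solves lo hi q ->
  (forall i a, (i < N)%nat -> (a < n)%nat -> q t0 i a = p0 i a) ->
  forall u, between t0 t u -> coord_continuous N n q u /\
    forall i a, (i < N)%nat -> (a < n)%nat -> q u i a = picard_step q u i a.
Proof.
  intros Hlo Hhi Hlot Hthi Hq Hq0.
  assert (Hcont : forall u, between t0 t u -> coord_continuous N n q u).
  { intros u Hu i a Hi Ha. destruct (between_Rbar_interval lo hi t0 t u) as [H1 H2]; auto.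
    apply ex_derive_continuous_R. eexists. apply Hq; auto. }
  intros u Hu. split; [auto|]. intros i a Hi Ha.
  assert (HR : is_RInt (fun v => F i a v (q v)) t0 u (minus (q u i a) (q t0 i a))).
  { apply (is_RInt_derive (fun v => q v i a)); intros v Hv;
      assert (Hv' := between_trans _ _ _ _ Hu Hv).
    - destruct (between_Rbar_interval lo hi t0 t v) as [H1 H2]; auto.
    - apply continuous_F_along; auto. }
  unfold picard_step. rewrite (is_RInt_unique _ _ _ _ HR), Hq0 by auto.
  unfold minus, plus, opp; simpl. ring.
Qed.

Lemma picard_limit_unique (lo hi : Rbar) (q : R -> config) :
  Rbar_lt lo t0 -> Rbar_lt t0 hi -> solves lo hi q ->
  (forall i a, (i < N)%nat -> (a < n)%nat -> q t0 i a = p0 i a) ->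
  forall t : R, Rbar_lt lo t -> Rbar_lt t hi -> forall i a, (i < N)%nat -> (a < n)%nat ->
    q t i a = picard_limit t i a.
Proof.
  intros Hlo Hhi Hq Hq0 t Hlot Hthi i a Hi Ha.
  assert (Hfix := solution_picard_fixed lo hi q t Hlo Hhi Hlot Hthi Hq Hq0).
  set (T := Rabs (t - t0)).
  assert (HT : 0 <= T) by apply Rabs_pos.
  assert (Hqbox : forall u, between t0 t u -> in_box N n p0 (Cb * T) (q u)).
  { intros u Hu i' a' Hi' Ha'. rewrite (proj2 (Hfix u Hu) i' a' Hi' Ha').
    eapply Rle_trans; [apply picard_step_dev; auto |].
    - intros v Hv. apply Hfix, (between_trans _ _ _ _ Hu Hv).
    - apply Rmult_le_compat_l; auto. apply between_abs; auto. }
  destruct (F_loc_lipschitz p0 (Cb * T)) as [L [HL HLip]].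
  set (K := INR N * (INR n * L)).
  set (B := INR N * (INR n * (2 * (Cb * T)))).
  apply (eq_of_dist_le_scal_null _ _ B (pow_fact (K * T)) 0 (is_lim_seq_pow_fact _)).
  intros m _. eapply Rle_trans; [apply (coord_le_dist_l1 N n); auto |].
  apply (picard_gronwall (between t0 t) (fun _ => q) (fun _ => picard_limit) (Cb * T) L B);
    auto using between_r.
  - intros s u Hs Hu. exact (between_trans _ _ _ _ Hs Hu).
  - intros _ s Hs. repeat split; try apply Hfix; try apply picard_limit_continuous; auto.
    apply picard_limit_in_box, between_abs; auto.
  - intros _ s Hs i' a' Hi' Ha'. split; [apply Hfix; auto |].
    apply (picard_limit_fixed T); auto. apply between_abs; auto.
  - intros s Hs. apply (dist_l1_in_box N n p0); auto. apply picard_limit_in_box, between_abs; auto.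
Qed.

End Picard.

Section Admissible.
Variable h : R -> R.
Hypothesis Hh : admissible_h h.

Lemma admissible_bounded : exists M, 0 <= M /\ forall y, Rabs (h y) <= M.
Proof.
  destruct Hh as [H0 [[M HM] _]]. exists (Rabs M). split; [apply Rabs_pos|]. intros y.
  destruct (Rle_dec y 0) as [Hy|Hy].
  - rewrite H0, Rabs_R0 by auto. apply Rabs_pos.
  - eapply Rle_trans; [apply HM; lra | apply Rle_abs].
Qed.

Lemma admissible_Derive_bounded Y : exists K, 0 <= K /\
  forall y, 0 < y <= Y -> Rabs (Derive h y) <= K.
Proof.
  destruct Hh as [_ [_ [Hreg [_ [[Md [dd [Hdd Hd]]] _]]]]].
  (* Near 0 the bound is assumed; on [dd/2, Y] the derivative is continuous. *)
  destruct (continuity_ab_maj (fun y => Rabs (Derive h y)) (dd / 2) (Rmax Y dd)) as [x [Hx _]].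
  { assert (Y1 := Rmax_r Y dd). lra. }
  { intros c Hc. apply (continuity_pt_comp (Derive h) Rabs c); [| apply Rcontinuity_abs].
    apply continuity_pt_filterlim, ex_derive_continuous_R, Hreg. lra. }
  exists (Rmax (Rabs Md) (Rabs (Derive h x))). split.
  { eapply Rle_trans; [apply Rabs_pos | apply Rmax_l]. }
  intros y Hy. destruct (Rlt_dec y dd) as [Hyd|Hyd].
  - eapply Rle_trans; [apply Hd; lra |]. eapply Rle_trans; [apply Rle_abs | apply Rmax_l].
  - eapply Rle_trans; [apply (Hx y) | apply Rmax_r]. assert (Y1 := Rmax_l Y dd). lra.
Qed.

Lemma admissible_lipschitz_pos Y : exists K, 0 <= K /\
  forall y z, 0 < y -> y <= z -> z <= Y -> Rabs (h z - h y) <= K * (z - y).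
Proof.
  destruct (admissible_Derive_bounded Y) as [K [HK HD]].
  destruct Hh as [_ [_ [Hreg _]]].
  exists K. split; [auto|]. intros y z Hy Hyz HzY.
  destruct (MVT_gen h y z (Derive h)) as [c [Hc Hceq]].
  - intros x Hx. apply Derive_correct, Hreg. unfold Rmin, Rmax in Hx. destruct Rle_dec; lra.
  - intros x Hx. apply continuity_pt_filterlim, ex_derive_continuous_R, Hreg.
    unfold Rmin, Rmax in Hx. destruct Rle_dec; lra.
  - rewrite Hceq, Rabs_mult, (Rabs_pos_eq (z - y)) by lra.
    apply Rmult_le_compat_r; [lra |]. apply HD. unfold Rmin, Rmax in Hc. destruct Rle_dec; lra.
Qed.

Lemma admissible_linear_bound Y : exists K, 0 <= K /\ forall z, 0 < z <= Y -> Rabs (h z) <= K * z.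
Proof.
  destruct (admissible_lipschitz_pos Y) as [K1 [HK1 Hlip]].
  destruct Hh as [_ [_ [_ [[Mq [dq [Hdq Hq]]] _]]]].
  exists (Rmax K1 (Rabs Mq)). split; [eapply Rle_trans; [exact HK1 | apply Rmax_l] |].
  intros z Hz. set (e := Rmin z dq / 2).
  assert (He : 0 < e < z /\ e < dq).
  { assert (Y1 := Rmin_l z dq). assert (Y2 := Rmin_r z dq).
    assert (Y3 : 0 < Rmin z dq) by (apply Rmin_pos; lra). unfold e. lra. }
  (* [|h z| <= |h z - h e| + |h e|] with [e < dq], where [|h e| <= Mq e] is assumed. *)
  assert (Hhe : Rabs (h e) <= Mq * e).
  { assert (X := Hq e ltac:(lra)). unfold Rdiv in X.
    rewrite Rabs_mult, Rabs_inv, (Rabs_pos_eq e) in X by lra.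
    apply (Rmult_le_compat_r e) in X; [| lra]. field_simplify in X; lra. }
  assert (Hm := Hlip e z ltac:(lra) ltac:(lra) ltac:(lra)).
  assert (K1 * (z - e) <= Rmax K1 (Rabs Mq) * (z - e))
    by (apply Rmult_le_compat_r; [lra | apply Rmax_l]).
  assert (Mq * e <= Rmax K1 (Rabs Mq) * e).
  { apply Rmult_le_compat_r; [lra |]. eapply Rle_trans; [apply Rle_abs | apply Rmax_r]. }
  replace (h z) with ((h z - h e) + h e) by ring.
  eapply Rle_trans; [apply Rabs_triang | lra].
Qed.

Lemma admissible_lipschitz Y : exists K, 0 <= K /\
  forall y z, y <= Y -> z <= Y -> Rabs (h y - h z) <= K * Rabs (y - z).
Proof.
  destruct (admissible_lipschitz_pos Y) as [K1 [HK1 Hlip]].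
  destruct (admissible_linear_bound Y) as [K2 [HK2 Hlin]].
  destruct Hh as [H0 _].
  exists (Rmax K1 K2). assert (HK1K := Rmax_l K1 K2). assert (HK2K := Rmax_r K1 K2).
  split; [lra |]. intros y z Hy Hz.
  destruct (Rle_dec y 0) as [Hy0|Hy0]; destruct (Rle_dec z 0) as [Hz0|Hz0].
  - rewrite !H0 by auto. rewrite Rminus_0_r, Rabs_R0. apply Rmult_le_pos; [lra | apply Rabs_pos].
  - rewrite (H0 y), Rminus_0_l, Rabs_Ropp, (Rabs_left1 (y - z)) by lra.
    eapply Rle_trans; [apply Hlin; lra |]. apply Rmult_le_compat; lra.
  - rewrite (H0 z), Rminus_0_r, (Rabs_pos_eq (y - z)) by lra.
    eapply Rle_trans; [apply Hlin; lra |]. apply Rmult_le_compat; lra.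
  - destruct (Rle_dec y z) as [Hyz|Hyz].
    + rewrite <- Rabs_Ropp, Ropp_minus_distr, (Rabs_left1 (y - z)) by lra.
      replace (- (y - z)) with (z - y) by ring.
      eapply Rle_trans; [apply Hlip; lra |]. apply Rmult_le_compat_r; lra.
    + rewrite (Rabs_pos_eq (y - z)) by lra.
      eapply Rle_trans; [apply Hlip; lra |]. apply Rmult_le_compat_r; lra.
Qed.

End Admissible.

Section BoxLipschitz.
Variables N n : nat.

Definition box_lipschitz_bounded (f : config -> R) : Prop :=
  forall c r, exists L M, 0 <= L /\ 0 <= M /\
  forall p q, in_box N n c r p -> in_box N n c r q ->
    Rabs (f p - f q) <= L * dist_l1 N n p q /\ Rabs (f p) <= M.

Lemma box_lipschitz_bounded_ext f g :
  (forall p, f p = g p) -> box_lipschitz_bounded f -> box_lipschitz_bounded g.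
Proof.
  intros E H c r. destruct (H c r) as [L [M [HL [HM Hb]]]]. exists L, M. do 2 (split; [auto|]).
  intros p q Hp Hq. rewrite <- !E. auto.
Qed.

Lemma box_lipschitz_bounded_const k : box_lipschitz_bounded (fun _ => k).
Proof.
  intros c r. exists 0, (Rabs k). split; [lra|]. split; [apply Rabs_pos|].
  intros p q _ _. rewrite Rminus_eq_0, Rabs_R0, Rmult_0_l. lra.
Qed.

Lemma box_lipschitz_bounded_coord i a : (i < N)%nat -> (a < n)%nat ->
  box_lipschitz_bounded (fun p => p i a).
Proof.
  intros Hi Ha c r. exists 1, (Rabs (c i a) + Rabs r).
  assert (Y1 := Rabs_pos (c i a)). assert (Y2 := Rle_abs r). assert (Y3 := Rabs_pos r).
  split; [lra|]. split; [lra|]. intros p q Hp _. split.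
  - rewrite Rmult_1_l. apply coord_le_dist_l1; auto.
  - specialize (Hp i a Hi Ha). replace (p i a) with (c i a + (p i a - c i a)) by ring.
    eapply Rle_trans; [apply Rabs_triang | lra].
Qed.

Lemma box_lipschitz_bounded_plus f g :
  box_lipschitz_bounded f -> box_lipschitz_bounded g -> box_lipschitz_bounded (fun p => f p + g p).
Proof.
  intros Hf Hg c r.
  destruct (Hf c r) as [L1 [M1 [HL1 [HM1 H1]]]]. destruct (Hg c r) as [L2 [M2 [HL2 [HM2 H2]]]].
  exists (L1 + L2), (M1 + M2). split; [lra|]. split; [lra|]. intros p q Hp Hq.
  destruct (H1 p q Hp Hq) as [A1 B1]. destruct (H2 p q Hp Hq) as [A2 B2]. split.
  - replace (f p + g p - (f q + g q)) with ((f p - f q) + (g p - g q)) by ring.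
    eapply Rle_trans; [apply Rabs_triang | lra].
  - eapply Rle_trans; [apply Rabs_triang | lra].
Qed.

Lemma box_lipschitz_bounded_opp f :
  box_lipschitz_bounded f -> box_lipschitz_bounded (fun p => - f p).
Proof.
  intros Hf c r. destruct (Hf c r) as [L [M [HL [HM H]]]]. exists L, M. do 2 (split; [auto|]).
  intros p q Hp Hq. replace (- f p - - f q) with (- (f p - f q)) by ring.
  rewrite !Rabs_Ropp. auto.
Qed.

Lemma box_lipschitz_bounded_mult f g :
  box_lipschitz_bounded f -> box_lipschitz_bounded g -> box_lipschitz_bounded (fun p => f p * g p).
Proof.
  intros Hf Hg c r.
  destruct (Hf c r) as [L1 [M1 [HL1 [HM1 H1]]]]. destruct (Hg c r) as [L2 [M2 [HL2 [HM2 H2]]]].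
  exists (M1 * L2 + M2 * L1), (M1 * M2). split; [nra|]. split; [nra|]. intros p q Hp Hq.
  destruct (H1 p q Hp Hq) as [A1 B1]. destruct (H2 p q Hp Hq) as [A2 B2].
  destruct (H2 q p Hq Hp) as [_ B2']. rewrite Rabs_mult.
  split; [| apply Rmult_le_compat; auto; apply Rabs_pos].
  replace (f p * g p - f q * g q) with (f p * (g p - g q) + g q * (f p - f q)) by ring.
  eapply Rle_trans; [apply Rabs_triang |]. rewrite !Rabs_mult.
  assert (D0 := dist_l1_nonneg N n p q).
  assert (Rabs (f p) * Rabs (g p - g q) <= M1 * (L2 * dist_l1 N n p q))
    by (apply Rmult_le_compat; auto; apply Rabs_pos).
  assert (Rabs (g q) * Rabs (f p - f q) <= M2 * (L1 * dist_l1 N n p q))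
    by (apply Rmult_le_compat; auto; apply Rabs_pos).
  nra.
Qed.

Lemma box_lipschitz_bounded_sumR m (f : nat -> config -> R) :
  (forall k, (k < m)%nat -> box_lipschitz_bounded (f k)) ->
  box_lipschitz_bounded (fun p => sumR m (fun k => f k p)).
Proof.
  induction m as [|m IH]; intros H.
  - apply (box_lipschitz_bounded_ext (fun _ => 0));
      [reflexivity | apply box_lipschitz_bounded_const].
  - apply (box_lipschitz_bounded_ext (fun p => sumR m (fun k => f k p) + f m p));
      [intros; rewrite sumR_S; reflexivity |].
    apply box_lipschitz_bounded_plus; [apply IH; auto | apply H; lia].
Qed.

Lemma box_lipschitz_bounded_admissible h f : admissible_h h ->
  box_lipschitz_bounded f -> box_lipschitz_bounded (fun p => h (f p)).
Proof.
  intros Hh Hf c r. destruct (Hf c r) as [L [M [HL [HM H]]]].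
  destruct (admissible_lipschitz h Hh M) as [K [HK HKb]].
  destruct (admissible_bounded h Hh) as [Mh [HMh HMhb]].
  exists (K * L), Mh. split; [nra|]. split; [auto|]. intros p q Hp Hq.
  destruct (H p q Hp Hq) as [A B]. destruct (H q p Hq Hp) as [_ B']. split; [| apply HMhb].
  eapply Rle_trans; [apply HKb |].
  - eapply Rle_trans; [apply Rle_abs | exact B].
  - eapply Rle_trans; [apply Rle_abs | exact B'].
  - rewrite Rmult_assoc. apply Rmult_le_compat_l; auto.
Qed.

Lemma box_lipschitz_bounded_h_psi E d i h : (i < N)%nat -> admissible_h h ->
  box_lipschitz_bounded (fun p => h (psi N n E d i p)).
Proof.
  intros Hi Hh. apply box_lipschitz_bounded_admissible; auto. unfold psi.
  apply box_lipschitz_bounded_mult; [apply box_lipschitz_bounded_const |].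
  apply (box_lipschitz_bounded_sumR N
           (fun j p => if E i j then (dist2 n p i j - d i j ^ 2) ^ 2 else 0)).
  intros j Hj. destruct (E i j); [| apply box_lipschitz_bounded_const].
  assert (Hdiff : box_lipschitz_bounded (fun p => dist2 n p i j - d i j ^ 2)).
  { apply (box_lipschitz_bounded_ext (fun p => dist2 n p i j + - (d i j ^ 2))); [intros; ring |].
    apply box_lipschitz_bounded_plus; [| apply box_lipschitz_bounded_const].
    apply (box_lipschitz_bounded_sumR n (fun a p => (p j a - p i a) ^ 2)). intros a Ha.
    assert (Hd : box_lipschitz_bounded (fun p => p j a + - p i a)).
    { apply box_lipschitz_bounded_plus;
        [| apply box_lipschitz_bounded_opp]; apply box_lipschitz_bounded_coord; auto. }
    apply (box_lipschitz_bounded_ext (fun p => (p j a + - p i a) * (p j a + - p i a)));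
      [intros; ring |].
    apply box_lipschitz_bounded_mult; auto. }
  apply (box_lipschitz_bounded_ext
           (fun p => (dist2 n p i j - d i j ^ 2) * (dist2 n p i j - d i j ^ 2))); [intros; ring |].
  apply box_lipschitz_bounded_mult; auto.
Qed.

End BoxLipschitz.

Lemma Rabs_scal_cos_sin_le s x y A B : 0 <= s ->
  Rabs (s * cos x * A + s * sin y * B) <= s * (Rabs A + Rabs B).
Proof.
  intros Hs. eapply Rle_trans; [apply Rabs_triang |]. rewrite !Rabs_mult, (Rabs_pos_eq s) by auto.
  assert (Hc : Rabs (cos x) <= 1) by apply Rabs_le, COS_bound.
  assert (Hsn : Rabs (sin y) <= 1) by apply Rabs_le, SIN_bound.
  assert (s * Rabs (cos x) * Rabs A <= s * 1 * Rabs A).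
  { apply Rmult_le_compat_r; [apply Rabs_pos | apply Rmult_le_compat_l; auto]. }
  assert (s * Rabs (sin y) * Rabs B <= s * 1 * Rabs B).
  { apply Rmult_le_compat_r; [apply Rabs_pos | apply Rmult_le_compat_l; auto]. }
  lra.
Qed.

Section ClosedLoopField.
Variables (N n : nat) (E : nat -> nat -> bool) (d : nat -> nat -> R) (b : nat -> nat -> nat -> R)
  (om ph : nat -> nat -> R) (h1 h2 : R -> R).
Hypothesis Hh1 : admissible_h h1.
Hypothesis Hh2 : admissible_h h2.

Let u := ctrl N n E d om ph h1 h2.
Let F := field N n E d b om ph h1 h2.

Lemma ctrl_bounded : exists M, 0 <= M /\ forall i k t p, Rabs (u i k t p) <= sqrt (om i k) * M.
Proof.
  destruct (admissible_bounded h1 Hh1) as [M1 [HM1 HB1]].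
  destruct (admissible_bounded h2 Hh2) as [M2 [HM2 HB2]].
  exists (M1 + M2). split; [lra|]. intros i k t p. unfold u, ctrl.
  eapply Rle_trans; [apply Rabs_scal_cos_sin_le, sqrt_pos |].
  apply Rmult_le_compat_l; [apply sqrt_pos |]. apply Rplus_le_compat; auto.
Qed.

Lemma ctrl_loc_lipschitz c r : exists L, 0 <= L /\
  forall i k t p q, (i < N)%nat -> in_box N n c r p -> in_box N n c r q ->
  Rabs (u i k t p - u i k t q) <= sqrt (om i k) * (L * dist_l1 N n p q).
Proof.
  destruct (fin_common_const N (fun i L => forall p q, in_box N n c r p -> in_box N n c r q ->
      Rabs (h1 (psi N n E d i p) - h1 (psi N n E d i q))
      + Rabs (h2 (psi N n E d i p) - h2 (psi N n E d i q)) <= L * dist_l1 N n p q))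
    as [L [HL HLip]].
  { intros i L L' HLL H p q Hp Hq. eapply Rle_trans; [apply H; auto |].
    apply Rmult_le_compat_r; [apply dist_l1_nonneg | auto]. }
  { intros i Hi.
    destruct (box_lipschitz_bounded_h_psi N n E d i h1 Hi Hh1 c r) as [L1 [M1 [HL1 [_ H1]]]].
    destruct (box_lipschitz_bounded_h_psi N n E d i h2 Hi Hh2 c r) as [L2 [M2 [HL2 [_ H2]]]].
    exists (L1 + L2). split; [lra|]. intros p q Hp Hq.
    destruct (H1 p q Hp Hq) as [A1 _]. destruct (H2 p q Hp Hq) as [A2 _]. lra. }
  exists L. split; [auto|]. intros i k t p q Hi Hp Hq. unfold u, ctrl.
  match goal with
  | |- Rabs (?s * cos ?x * ?A + ?s * sin ?y * ?B - (?s * cos ?x * ?A' + ?s * sin ?y * ?B')) <= _ =>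
      replace (s * cos x * A + s * sin y * B - (s * cos x * A' + s * sin y * B'))
        with (s * cos x * (A - A') + s * sin y * (B - B')) by ring
  end.
  eapply Rle_trans; [apply Rabs_scal_cos_sin_le, sqrt_pos |].
  apply Rmult_le_compat_l; [apply sqrt_pos | apply HLip; auto].
Qed.

Lemma field_bounded : exists Cb, 0 <= Cb /\
  forall i a t p, (i < N)%nat -> (a < n)%nat -> Rabs (F i a t p) <= Cb.
Proof.
  destruct ctrl_bounded as [M [HM Hu]].
  destruct (ub_fin2 N n (fun i a => sumR n (fun k => sqrt (om i k) * M * Rabs (b i k a))))
    as [C [HC HCb]].
  exists C. split; [auto|]. intros i a t p Hi Ha. eapply Rle_trans; [| exact (HCb i a Hi Ha)].
  unfold F, field. fold u. eapply Rle_trans; [apply sumR_abs |]. apply sumR_le. intros k Hk.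
  rewrite Rabs_mult. apply Rmult_le_compat_r; [apply Rabs_pos | apply Hu].
Qed.

Lemma field_loc_lipschitz c r : exists L, 0 <= L /\
  forall t p q, in_box N n c r p -> in_box N n c r q ->
  forall i a, (i < N)%nat -> (a < n)%nat -> Rabs (F i a t p - F i a t q) <= L * dist_l1 N n p q.
Proof.
  destruct (ctrl_loc_lipschitz c r) as [L [HL Hu]].
  destruct (ub_fin2 N n (fun i a => sumR n (fun k => sqrt (om i k) * Rabs (b i k a)) * L))
    as [C [HC HCb]].
  exists C. split; [auto|]. intros t p q Hp Hq i a Hi Ha.
  assert (D0 := dist_l1_nonneg N n p q).
  eapply Rle_trans; [| apply Rmult_le_compat_r; [exact D0 | exact (HCb i a Hi Ha)]].
  unfold F, field. fold u. rewrite <- sumR_minus. eapply Rle_trans; [apply sumR_abs |].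
  rewrite Rmult_assoc, <- sumR_mult_r. apply sumR_le. intros k Hk.
  replace (u i k t p * b i k a - u i k t q * b i k a)
    with ((u i k t p - u i k t q) * b i k a) by ring.
  rewrite Rabs_mult.
  replace (sqrt (om i k) * Rabs (b i k a) * (L * dist_l1 N n p q))
    with (sqrt (om i k) * (L * dist_l1 N n p q) * Rabs (b i k a)) by ring.
  apply Rmult_le_compat_r; [apply Rabs_pos | apply Hu; auto].
Qed.

Lemma field_continuous_t i a p t : continuous (fun s => F i a s p) t.
Proof.
  unfold F, field. apply (continuous_sumR n (fun k s => u i k s p * b i k a)). intros k _.
  apply ex_derive_continuous_R. unfold u, ctrl. auto_derive. auto.
Qed.

End ClosedLoopField.

Theorem proposition4p6
  (N n : nat)
  (E : nat -> nat -> bool)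
  (HE_range : forall i j, E i j = true -> (i < N)%nat /\ (j < N)%nat)
  (HE_sym : forall i j, E i j = E j i)
  (HE_irrefl : forall i, E i i = false)
  (HE_nonempty : exists i j, E i j = true)
  (d : nat -> nat -> R)
  (Hd_nonneg : forall i j, E i j = true -> 0 <= d i j)
  (Hd_sym : forall i j, E i j = true -> d i j = d j i)
  (b : nat -> nat -> nat -> R)
  (Hb_orthonormal : forall i k l, (i < N)%nat -> (k < n)%nat -> (l < n)%nat ->
     sumR n (fun a => b i k a * b i l a) = if Nat.eqb k l then 1 else 0)
  (om ph : nat -> nat -> R)
  (Hom_pos : forall i k, (i < N)%nat -> (k < n)%nat -> 0 < om i k)
  (Hom_distinct : forall i k j l, (i < N)%nat -> (k < n)%nat ->
     (j < N)%nat -> (l < n)%nat -> (i, k) <> (j, l) -> om i k <> om j l)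
  (h1 h2 : R -> R)
  (Hh1 : admissible_h h1) (Hh2 : admissible_h h2)
  (Hh12 : exists r' c', 0 < r' /\ 0 < c' /\ forall y, 0 < y <= r' ->
     Derive h2 y * h1 y - Derive h1 y * h2 y <= - c' * y) :
  forall (t0 : R) (p0 : config),
  exists p : R -> config,
    is_solution_on N n E d b om ph h1 h2 m_infty p_infty p /\
    (forall i a, (i < N)%nat -> (a < n)%nat -> p t0 i a = p0 i a) /\
    (forall (lo hi : Rbar) (q : R -> config),
       Rbar_lt lo t0 -> Rbar_lt t0 hi ->
       is_solution_on N n E d b om ph h1 h2 lo hi q ->
       (forall i a, (i < N)%nat -> (a < n)%nat -> q t0 i a = p0 i a) ->
       forall t : R, Rbar_lt lo t -> Rbar_lt t hi ->
       forall i a, (i < N)%nat -> (a < n)%nat -> q t i a = p t i a).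
Proof.
  (* Well-posedness uses only the regularity of h1, h2; the hypotheses on the graph,
     the basis, the frequencies, (v) and (vi) serve the stability analysis, not this result. *)
  intros t0 p0.
  set (F := field N n E d b om ph h1 h2).
  destruct (field_bounded N n E d b om ph h1 h2 Hh1 Hh2) as [Cb [HCb HFb]].
  assert (HFl := field_loc_lipschitz N n E d b om ph h1 h2 Hh1 Hh2).
  assert (HFc := field_continuous_t N n E d b om ph h1 h2).
  exists (picard_limit F t0 p0). split; [| split].
  - intros t _ _ i a Hi Ha. apply (is_derive_picard_limit N n F t0 p0 Cb); auto.
  - intros i a _ _. apply picard_limit_t0.
  - intros lo hi q Hlo Hhi Hq Hq0.
    exact (picard_limit_unique N n F t0 p0 Cb HCb HFb HFl HFc lo hi q Hlo Hhi Hq Hq0).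
Qed.
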